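(* Let $\gamma>0$, $b\ge0$, $t_0\in\mathbb{R}$, and let $\beta\ge0$ be arbitrary. Let $w_n$ ($n\ge0$) be defined on $[0,\infty)\times\mathbb{R}$ by $w_n(x_3,t)=0$ for $t\le t_0$ and, for $t>t_0$, \[ w_0(x_3,t)=\frac{1}{4(\pi\gamma)^{3/2}\sqrt{t-t_0}}e^{-\frac{x_3^2}{4\gamma(t-t_0)}},\qquad w_n(x_3,t)=\frac{-\beta}{\sqrt{\pi\gamma}}\int_{t_0}^t\frac{w_{n-1}(0,s)}{\sqrt{t-s}}e^{-\frac{x_3^2}{4\gamma(t-s)}}\,ds\ \ (n\ge1). \] Then the series $\sum_{n=0}^\infty w_n(x_3,t)$ converges absolutely and locally uniformly on $[0,\infty)\times(t_0,\infty)$. Consequently the series $\sum_{n=0}^\infty v_n(x,t)$ with $v_n(x,t)=\frac{e^{-b(t-t_0)}}{t-t_0}e^{-\frac{x_1^2+x_2^2}{4\gamma(t-t_0)}}w_n(x_3,t)$ converges absolutely and locally uniformly on $\overline{\mathbb{R}^3_+}\times(t_0,\infty)$, regardless of the value of $\beta$.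
   Context: $\overline{\mathbb{R}^3_+}=\{x\in\mathbb{R}^3:x_3\ge0\}$. The $v_n$ are the terms of the Born series (Robin impedance term $\beta u$ treated as a perturbation of the Neumann problem) for the half-space diffusion equation $(\partial_t-\gamma\Delta+b)u=0$ with boundary condition $\gamma\partial_\nu u+\beta u=\delta(x_1)\delta(x_2)\delta(t-t_0)$. *)

From Stdlib Require Import Reals Lra ClassicalEpsilon.
Open Scope R_scope.

Definition is_improper_int (f : R -> R) (a b l : R) : Prop :=
  (forall c d, a < c -> c <= d -> d < b -> exists _ : Riemann_integrable f c d, True) /\
  (forall eps, 0 < eps -> exists delta, 0 < delta /\
     forall c d (pr : Riemann_integrable f c d),
       a < c -> c < a + delta -> b - delta < d -> d < b -> c <= d ->
       Rabs (RiemannInt pr - l) < eps).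

Definition improper_int (f : R -> R) (a b : R) : R :=
  epsilon (inhabits 0) (fun l => is_improper_int f a b l).

Fixpoint w (gamma beta t0 : R) (n : nat) (x3 t : R) {struct n} : R :=
  if Rle_dec t t0 then 0 else
  match n with
  | O => / (4 * Rpower (PI * gamma) (3/2) * sqrt (t - t0))
           * exp (- (x3 ^ 2) / (4 * gamma * (t - t0)))
  | S m => (- beta / sqrt (PI * gamma)) *
           improper_int (fun s => w gamma beta t0 m 0 s / sqrt (t - s)
                                   * exp (- (x3 ^ 2) / (4 * gamma * (t - s)))) t0 t
  end.

Definition v (gamma b beta t0 : R) (n : nat) (x1 x2 x3 t : R) : R :=
  exp (- b * (t - t0)) / (t - t0)
  * exp (- (x1 ^ 2 + x2 ^ 2) / (4 * gamma * (t - t0)))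
  * w gamma beta t0 n x3 t.

Definition series_loc_unif_2 (t0 : R) (u : nat -> R -> R -> R) (S : R -> R -> R) : Prop :=
  forall x3 t, 0 <= x3 -> t0 < t ->
  exists delta, 0 < delta /\
  forall eps, 0 < eps -> exists N : nat, forall n : nat, (N <= n)%nat ->
  forall y s, 0 <= y -> t0 < s -> Rabs (y - x3) < delta -> Rabs (s - t) < delta ->
    Rabs (sum_f_R0 (fun k => u k y s) n - S y s) < eps.

Definition series_loc_unif_4 (t0 : R) (u : nat -> R -> R -> R -> R -> R)
  (S : R -> R -> R -> R -> R) : Prop :=
  forall x1 x2 x3 t, 0 <= x3 -> t0 < t ->
  exists delta, 0 < delta /\
  forall eps, 0 < eps -> exists N : nat, forall n : nat, (N <= n)%nat ->
  forall y1 y2 y3 s, 0 <= y3 -> t0 < s ->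
    Rabs (y1 - x1) < delta -> Rabs (y2 - x2) < delta ->
    Rabs (y3 - x3) < delta -> Rabs (s - t) < delta ->
    Rabs (sum_f_R0 (fun k => u k y1 y2 y3 s) n - S y1 y2 y3 s) < eps.

(* By induction, w_n(0,t) = c_n (t - t0)^((n-1)/2) and |w_n(x3,t)| <= |c_n| (t - t0)^((n-1)/2),
   where c_(n+1) = -beta / sqrt(pi gamma) * c_n * B((n+1)/2, 1/2): the substitution
   s = t0 + (t - t0) u turns the defining integral at x3 = 0 into a Beta integral, and the
   Gaussian factor only makes the integrand smaller. Since B((n+1)/2, 1/2) = O(n^(-1/2)) tends
   to 0, the series sum |c_n| r^n converges for every r, so on each strip
   0 < T1 <= t - t0 <= T2 the terms w_n, and hence the v_n (whose extra factor is at most 1/T1),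
   are dominated by a summable sequence independent of the point; the Weierstrass M-test
   concludes. *)

From Stdlib Require Import Reals Lra Lia ClassicalEpsilon.
From Coquelicot Require Import Coquelicot.
Open Scope R_scope.

(** * Summable majorants *)

Lemma ex_series_ratio_le (a : nat -> R) (q : R) (N : nat) : 0 <= q < 1 ->
  (forall n, 0 <= a n) -> (forall n, (N <= n)%nat -> a (S n) <= q * a n) -> ex_series a.
Proof.
  intros Hq Ha Hr.
  assert (Hgeo : forall k, a (N + k)%nat <= a N * q ^ k).
  { induction k as [| k IH]; [rewrite Nat.add_0_r; simpl; lra |].
    rewrite <- plus_n_Sm. eapply Rle_trans; [apply Hr; lia |]. simpl.
    pose proof (Ha (N + k)%nat). nra. }
  apply (ex_series_incr_n a N).
  apply (ex_series_le (V := R_CompleteNormedModule)) with (fun k => a N * q ^ k).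
  - intros k. change (Rabs (a (N + k)%nat) <= a N * q ^ k). rewrite Rabs_pos_eq; auto.
  - apply (ex_series_scal (V := R_NormedModule) (a N)), ex_series_geom.
    rewrite Rabs_pos_eq; lra.
Qed.

(* [sum_maj1] is stated for families indexed by a real; we use one
   that does not depend on its real argument. *)
Lemma Series_unif_Mtest {X : Type} (u : nat -> X -> R) (A : X -> Prop) (M : nat -> R) :
  ex_series M -> (forall n x, A x -> Rabs (u n x) <= M n) ->
  forall eps, 0 < eps -> exists N : nat, forall n, (N <= n)%nat -> forall x, A x ->
    Rabs (sum_f_R0 (fun k => u k x) n - Series (fun k => u k x)) < eps.
Proof.
  intros HM Hu eps Heps.
  assert (HMcv := proj1 (is_series_Reals _ _) (Series_correct _ HM)).
  destruct (HMcv eps Heps) as [N HN]. exists N. intros n Hn x Hx.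
  assert (Hux : ex_series (fun k => u k x))
    by (apply (ex_series_le (V := R_CompleteNormedModule)) with M; auto).
  pose proof (sum_maj1 (fun k _ => u k x) M 0 _ _ n
    (proj1 (is_series_Reals _ _) (Series_correct _ Hux)) HMcv (fun k => Hu k x Hx)) as H.
  unfold SP in H. specialize (HN n Hn). unfold Rdist in HN. apply Rabs_def2 in HN.
  rewrite Rabs_minus_sym. lra.
Qed.

Definition dominated_on_strips_2 (t0 : R) (u : nat -> R -> R -> R) : Prop :=
  forall T1 T2, 0 < T1 -> exists M, ex_series M /\
    forall n y s, T1 <= s - t0 <= T2 -> Rabs (u n y s) <= M n.

Definition dominated_on_strips_4 (t0 : R) (u : nat -> R -> R -> R -> R -> R) : Prop :=
  forall T1 T2, 0 < T1 -> exists M, ex_series M /\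
    forall n y1 y2 y3 s, T1 <= s - t0 <= T2 -> Rabs (u n y1 y2 y3 s) <= M n.

Lemma series_loc_unif_2_of_dominated t0 (u : nat -> R -> R -> R) :
  dominated_on_strips_2 t0 u ->
  series_loc_unif_2 t0 u (fun y s => Series (fun k => u k y s)).
Proof.
  intros Hmaj x3 t _ Ht. exists ((t - t0) / 2); split; [lra |]. intros eps Heps.
  destruct (Hmaj ((t - t0) / 2) (2 * (t - t0)) ltac:(lra)) as [M [HM Hu]].
  destruct (Series_unif_Mtest (fun n (p : R * R) => u n (fst p) (snd p))
    (fun p => (t - t0) / 2 <= snd p - t0 <= 2 * (t - t0)) M HM) with eps as [N HN];
    [intros n [y s] Hs; now apply Hu | exact Heps |].
  exists N. intros n Hn y s _ _ _ Hst. apply Rabs_def2 in Hst.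
  apply (HN n Hn (y, s)). simpl. lra.
Qed.

Lemma series_loc_unif_2_abs_of_dominated t0 (u : nat -> R -> R -> R) :
  dominated_on_strips_2 t0 u ->
  series_loc_unif_2 t0 u (fun y s => Series (fun k => u k y s)) /\
  series_loc_unif_2 t0 (fun n y s => Rabs (u n y s)) (fun y s => Series (fun k => Rabs (u k y s))).
Proof.
  intros Hmaj. split; apply series_loc_unif_2_of_dominated; auto.
  intros T1 T2 HT1. destruct (Hmaj T1 T2 HT1) as [M [HM Hu]].
  exists M; split; auto. intros. rewrite Rabs_Rabsolu. auto.
Qed.

Lemma series_loc_unif_4_of_dominated t0 (u : nat -> R -> R -> R -> R -> R) :
  dominated_on_strips_4 t0 u ->
  series_loc_unif_4 t0 u (fun y1 y2 y3 s => Series (fun k => u k y1 y2 y3 s)).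
Proof.
  intros Hmaj x1 x2 x3 t _ Ht. exists ((t - t0) / 2); split; [lra |]. intros eps Heps.
  destruct (Hmaj ((t - t0) / 2) (2 * (t - t0)) ltac:(lra)) as [M [HM Hu]].
  destruct (Series_unif_Mtest
    (fun n (p : R * R * R * R) => u n (fst (fst (fst p))) (snd (fst (fst p))) (snd (fst p)) (snd p))
    (fun p => (t - t0) / 2 <= snd p - t0 <= 2 * (t - t0)) M HM) with eps as [N HN];
    [intros n [[[y1 y2] y3] s] Hs; now apply Hu | exact Heps |].
  exists N. intros n Hn y1 y2 y3 s _ _ _ _ _ Hst. apply Rabs_def2 in Hst.
  apply (HN n Hn (y1, y2, y3, s)). simpl. lra.
Qed.

Lemma series_loc_unif_4_abs_of_dominated t0 (u : nat -> R -> R -> R -> R -> R) :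
  dominated_on_strips_4 t0 u ->
  series_loc_unif_4 t0 u (fun y1 y2 y3 s => Series (fun k => u k y1 y2 y3 s)) /\
  series_loc_unif_4 t0 (fun n y1 y2 y3 s => Rabs (u n y1 y2 y3 s))
    (fun y1 y2 y3 s => Series (fun k => Rabs (u k y1 y2 y3 s))).
Proof.
  intros Hmaj. split; apply series_loc_unif_4_of_dominated; auto.
  intros T1 T2 HT1. destruct (Hmaj T1 T2 HT1) as [M [HM Hu]].
  exists M; split; auto. intros. rewrite Rabs_Rabsolu. auto.
Qed.

(** * Improper Riemann integrals *)

(* The windows [c, d] exhausting (a, b); [is_improper_int] is convergence along this filter. *)
Definition near_ends (a b : R) (P : R * R -> Prop) : Prop :=
  exists delta, 0 < delta /\
    forall c d, a < c < a + delta -> b - delta < d < b -> c <= d -> P (c, d).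

Global Instance near_ends_filter a b : Filter (near_ends a b).
Proof.
  constructor.
  - exists 1; split; [lra | easy].
  - intros P Q [dP [HdP HP]] [dQ [HdQ HQ]].
    exists (Rmin dP dQ); split; [now apply Rmin_pos |].
    pose proof (Rmin_l dP dQ); pose proof (Rmin_r dP dQ).
    intros c d Hc Hd Hcd; split; [apply HP | apply HQ]; auto; lra.
  - intros P Q HPQ [dP [HdP HP]]. exists dP; split; auto.
Qed.

Lemma near_ends_proper a b : a < b -> ProperFilter (near_ends a b).
Proof.
  intros Hab; split; [| apply near_ends_filter].
  intros P [delta [Hdelta HP]].
  pose proof (Rmin_l delta (b - a)); pose proof (Rmin_r delta (b - a)).
  set (m := Rmin delta (b - a)) in *.
  assert (0 < m) by (apply Rmin_pos; lra).
  exists (a + m / 2, b - m / 2). apply HP; lra.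
Qed.

Definition is_improper_RInt (f : R -> R) (a b l : R) : Prop :=
  (forall c d, a < c -> c <= d -> d < b -> ex_RInt f c d) /\
  (forall eps, 0 < eps -> near_ends a b (fun p => Rabs (RInt f (fst p) (snd p) - l) < eps)).

Lemma is_improper_RInt_Reals f a b l : is_improper_RInt f a b l <-> is_improper_int f a b l.
Proof.
  split; intros [Hex Hlim]; split.
  - intros c d Hc Hcd Hd. now exists (ex_RInt_Reals_0 _ _ _ (Hex c d Hc Hcd Hd)).
  - intros eps Heps. destruct (Hlim eps Heps) as [delta [Hdelta H]].
    exists delta; split; auto. intros c d pr Hc1 Hc2 Hd1 Hd2 Hcd.
    rewrite <- RInt_Reals. now apply (H c d).
  - intros c d Hc Hcd Hd. destruct (Hex c d Hc Hcd Hd) as [pr _]. now apply ex_RInt_Reals_1.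
  - intros eps Heps. destruct (Hlim eps Heps) as [delta [Hdelta H]].
    exists delta; split; auto. intros c d Hc Hd Hcd.
    destruct (Hex c d ltac:(lra) Hcd ltac:(lra)) as [pr _].
    simpl. rewrite (RInt_Reals _ _ _ pr). apply H; lra.
Qed.

Lemma is_improper_RInt_unique f a b l1 l2 :
  a < b -> is_improper_RInt f a b l1 -> is_improper_RInt f a b l2 -> l1 = l2.
Proof.
  intros Hab [_ H1] [_ H2]. pose proof (near_ends_proper a b Hab).
  apply cond_eq. intros eps Heps.
  destruct (filter_ex _
    (filter_and (F := near_ends a b) _ _ (H1 (eps / 2) ltac:(lra)) (H2 (eps / 2) ltac:(lra))))
    as [p [K1 K2]].
  rewrite Rabs_minus_sym in K1.
  pose proof (Rabs_triang (l1 - RInt f (fst p) (snd p)) (RInt f (fst p) (snd p) - l2)).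
  replace (l1 - RInt f (fst p) (snd p) + (RInt f (fst p) (snd p) - l2)) with (l1 - l2) in * by ring.
  lra.
Qed.

Lemma improper_int_correct f a b l :
  a < b -> is_improper_RInt f a b l -> improper_int f a b = l.
Proof.
  intros Hab H. unfold improper_int.
  assert (E : exists l, is_improper_int f a b l) by (exists l; now apply is_improper_RInt_Reals).
  apply is_improper_RInt_unique with f a b; auto.
  apply is_improper_RInt_Reals, (epsilon_spec (inhabits 0) _ E).
Qed.

Lemma near_ends_inside a b : near_ends a b (fun p => a < fst p /\ fst p <= snd p /\ snd p < b).
Proof. exists 1; split; [lra |]. intros c d Hc Hd Hcd; simpl; lra. Qed.

Lemma Rmin_Rmax_between a b c d x :
  a < c < b -> a < d < b -> Rmin c d <= x <= Rmax c d -> a < x < b.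
Proof. unfold Rmin, Rmax; destruct (Rle_dec c d); lra. Qed.

Lemma ex_RInt_continuous_open (f : R -> R) a b c d :
  (forall x, a < x < b -> continuous f x) -> a < c < b -> a < d < b -> ex_RInt f c d.
Proof.
  intros Hf Hc Hd. apply (ex_RInt_continuous (V := R_CompleteNormedModule)).
  intros x Hx. apply Hf, (Rmin_Rmax_between a b c d); auto.
Qed.

Lemma Rabs_minus_le x y : Rabs (x - y) <= Rabs x + Rabs y.
Proof. unfold Rminus. rewrite <- (Rabs_Ropp y). apply Rabs_triang. Qed.

Lemma RInt_Chasles_R (f : R -> R) x y z :
  ex_RInt f x y -> ex_RInt f y z -> RInt f x y + RInt f y z = RInt f x z.
Proof. apply (RInt_Chasles (V := R_CompleteNormedModule)). Qed.

Lemma RInt_abs_le (f g : R -> R) c d : c <= d -> ex_RInt f c d -> ex_RInt g c d ->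
  (forall x, c <= x <= d -> Rabs (f x) <= g x) -> Rabs (RInt f c d) <= RInt g c d.
Proof.
  intros Hcd Hf Hg Hfg.
  apply (norm_RInt_le f g c d); [lra | exact Hfg
    | apply (RInt_correct (V := R_CompleteNormedModule)), Hf
    | apply (RInt_correct (V := R_CompleteNormedModule)), Hg].
Qed.

Lemma RInt_abs_le_abs (f g : R -> R) c d : ex_RInt f c d -> ex_RInt g c d ->
  (forall x, Rmin c d <= x <= Rmax c d -> Rabs (f x) <= g x) ->
  Rabs (RInt f c d) <= Rabs (RInt g c d).
Proof.
  intros Hf Hg Hfg. unfold Rmin, Rmax in Hfg. destruct (Rle_dec c d).
  - eapply Rle_trans; [apply RInt_abs_le | apply Rle_abs]; auto.
  - rewrite <- (Rabs_Ropp (RInt f c d)), <- (Rabs_Ropp (RInt g c d)),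
      (opp_RInt_swap (V := R_CompleteNormedModule) f),
      (opp_RInt_swap (V := R_CompleteNormedModule) g) by auto.
    eapply Rle_trans; [apply RInt_abs_le | apply Rle_abs]; try lra.
    + now apply (ex_RInt_swap (V := R_NormedModule)).
    + now apply (ex_RInt_swap (V := R_NormedModule)).
    + intros x Hx. apply Hfg. lra.
Qed.

Lemma is_improper_RInt_ext (f g : R -> R) a b l :
  (forall x, a < x < b -> f x = g x) -> is_improper_RInt f a b l -> is_improper_RInt g a b l.
Proof.
  intros Efg [Hex Hlim].
  assert (E : forall c d, a < c -> c <= d -> d < b ->
    forall x, Rmin c d < x < Rmax c d -> f x = g x).
  { intros c d Hc Hcd Hd x Hx. apply Efg, (Rmin_Rmax_between a b c d); lra. }
  split.
  - intros c d Hc Hcd Hd. apply (ex_RInt_ext f); [apply E | apply Hex]; auto.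
  - intros eps Heps.
    eapply filter_imp; [| exact (filter_and _ _ (Hlim eps Heps) (near_ends_inside a b))].
    intros [c d] [H [Hc [Hcd Hd]]]; simpl in *.
    now rewrite <- (RInt_ext f g) by (apply E; auto).
Qed.

Lemma continuity_pt_eps (G : R -> R) a : continuity_pt G a ->
  forall eps, 0 < eps -> exists delta, 0 < delta /\
    forall x, Rabs (x - a) < delta -> Rabs (G x - G a) < eps.
Proof.
  intros HG eps Heps. destruct (HG eps Heps) as [delta [Hdelta H]].
  exists delta; split; [lra |]. intros x Hx.
  destruct (Req_dec x a) as [-> | Hxa].
  - rewrite Rminus_diag, Rabs_R0; lra.
  - apply (H x). repeat split; auto.
Qed.

Lemma is_improper_RInt_derive (G g : R -> R) a b : a < b ->
  continuity_pt G a -> continuity_pt G b ->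
  (forall x, a < x < b -> is_derive G x (g x)) ->
  (forall x, a < x < b -> continuous g x) ->
  is_improper_RInt g a b (G b - G a).
Proof.
  intros Hab HGa HGb HD Hg; split.
  - intros c d Hc Hcd Hd. apply (ex_RInt_continuous_open g a b); auto; lra.
  - intros eps Heps.
    destruct (continuity_pt_eps G a HGa (eps / 2) ltac:(lra)) as [da [Hda Ka]].
    destruct (continuity_pt_eps G b HGb (eps / 2) ltac:(lra)) as [db [Hdb Kb]].
    exists (Rmin da db); split; [now apply Rmin_pos |].
    pose proof (Rmin_l da db); pose proof (Rmin_r da db).
    intros c d Hc Hd Hcd; simpl.
    assert (E : RInt g c d = G d - G c).
    { apply is_RInt_unique, (is_RInt_derive (V := R_CompleteNormedModule)).
      - intros x Hx. apply HD, (Rmin_Rmax_between a b c d); auto; lra.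
      - intros x Hx. apply Hg, (Rmin_Rmax_between a b c d); auto; lra. }
    rewrite E.
    specialize (Ka c ltac:(rewrite Rabs_right; lra)).
    specialize (Kb d ltac:(rewrite Rabs_left; lra)).
    replace (G d - G c - (G b - G a)) with ((G d - G b) - (G c - G a)) by ring.
    pose proof (Rabs_minus_le (G d - G b) (G c - G a)). lra.
Qed.

Lemma is_improper_RInt_cauchy (f : R -> R) a b : a < b ->
  (forall c d, a < c -> c <= d -> d < b -> ex_RInt f c d) ->
  cauchy (filtermap (fun p => RInt f (fst p) (snd p)) (near_ends a b)) ->
  exists l, is_improper_RInt f a b l.
Proof.
  intros Hab Hex HI. pose proof (near_ends_proper a b Hab).
  exists (lim (filtermap (fun p => RInt f (fst p) (snd p)) (near_ends a b))).
  split; auto. intros eps Heps.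
  exact (complete_cauchy _ (filtermap_proper_filter _ _ _ _ H) HI (mkposreal eps Heps)).
Qed.

Lemma is_improper_RInt_abs_le (f g : R -> R) a b l lg : a < b ->
  is_improper_RInt f a b l -> is_improper_RInt g a b lg ->
  (forall c d, a < c -> c <= d -> d < b -> Rabs (RInt f c d) <= RInt g c d) ->
  Rabs l <= lg.
Proof.
  intros Hab [_ Hf] [_ Hg] Hfg. pose proof (near_ends_proper a b Hab).
  apply Rle_plus_epsilon. intros e He.
  destruct (filter_ex _ (filter_and (F := near_ends a b) _ _ (Hf (e / 2) ltac:(lra))
    (filter_and (F := near_ends a b) _ _ (Hg (e / 2) ltac:(lra)) (near_ends_inside a b))))
    as [[c d] [K1 [K2 [Hc [Hcd Hd]]]]]; simpl in *.
  pose proof (Hfg c d Hc Hcd Hd).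
  pose proof (Rabs_triang (l - RInt f c d) (RInt f c d)).
  replace (l - RInt f c d + RInt f c d) with l in * by ring.
  rewrite Rabs_minus_sym in K1. apply Rabs_def2 in K2. lra.
Qed.

Lemma improper_RInt_dominated (f g : R -> R) a b lg : a < b ->
  (forall x, a < x < b -> continuous f x) -> is_improper_RInt g a b lg ->
  (forall x, a < x < b -> Rabs (f x) <= g x) ->
  exists l, is_improper_RInt f a b l /\ Rabs l <= lg.
Proof.
  intros Hab Hf Hg Hfg. pose proof Hg as [Hgex Hglim].
  assert (exf : forall c d, a < c < b -> a < d < b -> ex_RInt f c d)
    by (intros; now apply (ex_RInt_continuous_open f a b)).
  assert (exg : forall c d, a < c < b -> a < d < b -> ex_RInt g c d).
  { intros c d Hc Hd. destruct (Rle_dec c d).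
    - apply Hgex; lra.
    - apply (ex_RInt_swap (V := R_NormedModule)), Hgex; lra. }
  assert (bnd : forall c d, a < c -> c <= d -> d < b -> Rabs (RInt f c d) <= RInt g c d).
  { intros c d Hc Hcd Hd.
    apply RInt_abs_le; [lra | apply exf | apply exg | intros; apply Hfg]; lra. }
  assert (bnd_abs : forall c d, a < c < b -> a < d < b ->
    Rabs (RInt f c d) <= Rabs (RInt g c d)).
  { intros c d Hc Hd. apply RInt_abs_le_abs; auto.
    intros x Hx. apply Hfg, (Rmin_Rmax_between a b c d); auto. }
  destruct (is_improper_RInt_cauchy f a b Hab) as [l Hl].
  { intros; apply exf; lra. }
  2: { exists l; split; [| apply (is_improper_RInt_abs_le f g a b)]; auto. }
  (* Near both ends, the integrals of [f] over the gaps between two windows are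
     controlled by those of [g], which are small because the [g]-integrals converge. *)
  intros [eps Heps]; simpl.
  destruct (Hglim (eps / 4) ltac:(lra)) as [d0 [Hd0 K]].
  pose proof (Rmin_l d0 ((b - a) / 2)); pose proof (Rmin_r d0 ((b - a) / 2)).
  set (delta := Rmin d0 ((b - a) / 2)) in *.
  assert (0 < delta) by (apply Rmin_pos; lra).
  set (c' := a + delta / 2); set (d' := b - delta / 2).
  exists (RInt f c' d'), delta; split; auto.
  intros c d Hc Hd Hcd. change (Rabs (RInt f c d - RInt f c' d') < eps).
  assert (Kcd := K c d ltac:(lra) ltac:(lra) Hcd).
  assert (Kc'd := K c' d ltac:(unfold c'; lra) ltac:(lra) ltac:(unfold c'; lra)).
  assert (Kcd' := K c d' ltac:(lra) ltac:(unfold d'; lra) ltac:(unfold d'; lra)).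
  simpl in Kcd, Kc'd, Kcd'.
  assert (Hc' : a < c' < b) by (unfold c'; lra). assert (Hd' : a < d' < b) by (unfold d'; lra).
  pose proof (RInt_Chasles_R g c c' d (exg c c' ltac:(lra) Hc') (exg c' d Hc' ltac:(lra))).
  pose proof (RInt_Chasles_R g c d' d (exg c d' ltac:(lra) Hd') (exg d' d Hd' ltac:(lra))).
  pose proof (RInt_Chasles_R f c c' d (exf c c' ltac:(lra) Hc') (exf c' d Hc' ltac:(lra))).
  pose proof (RInt_Chasles_R f c' d' d (exf c' d' Hc' Hd') (exf d' d Hd' ltac:(lra))).
  pose proof (Rabs_minus_le (RInt g c d - lg) (RInt g c' d - lg)).
  pose proof (Rabs_minus_le (RInt g c d - lg) (RInt g c d' - lg)).
  replace (RInt g c d - lg - (RInt g c' d - lg)) with (RInt g c c') in * by lra.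
  replace (RInt g c d - lg - (RInt g c d' - lg)) with (RInt g d' d) in * by lra.
  replace (RInt f c d - RInt f c' d') with (RInt f c c' + RInt f d' d) by lra.
  pose proof (Rabs_triang (RInt f c c') (RInt f d' d)).
  pose proof (bnd_abs c c' ltac:(lra) Hc'). pose proof (bnd_abs d' d Hd' ltac:(lra)).
  lra.
Qed.

Lemma improper_int_dominated (f g : R -> R) a b lg : a < b ->
  (forall x, a < x < b -> continuous f x) -> is_improper_RInt g a b lg ->
  (forall x, a < x < b -> Rabs (f x) <= g x) ->
  is_improper_RInt f a b (improper_int f a b) /\ Rabs (improper_int f a b) <= lg.
Proof.
  intros Hab Hf Hg Hfg.
  destruct (improper_RInt_dominated f g a b lg Hab Hf Hg Hfg) as [l [Hl Hle]].
  now rewrite (improper_int_correct f a b l Hab Hl).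
Qed.

Lemma is_improper_RInt_affine (f g : R -> R) a b k l : a < b ->
  (forall x, a < x < b -> continuous f x) ->
  (forall u, 0 < u < 1 -> f (a + (b - a) * u) = k * g u) ->
  is_improper_RInt g 0 1 l -> is_improper_RInt f a b (k * (b - a) * l).
Proof.
  intros Hab Hf Hfg [Hgex Hglim]. set (L := b - a) in *.
  assert (HL : L = b - a) by reflexivity. clearbody L.
  split.
  - intros c d Hc Hcd Hd. apply (ex_RInt_continuous_open f a b); auto; lra.
  - intros eps Heps.
    set (e := eps / (Rabs k * L + 1)).
    assert (He : 0 < e) by (apply Rdiv_lt_0_compat; [| pose proof (Rabs_pos k)]; nra).
    destruct (Hglim e He) as [dg [Hdg K]].
    exists (dg * L); split; [nra |].
    intros c d Hc Hd Hcd; simpl.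
    set (c' := (c - a) / L); set (d' := (d - a) / L).
    assert (Ec : L * c' + a = c) by (unfold c'; field; lra).
    assert (Ed : L * d' + a = d) by (unfold d'; field; lra).
    assert (Hc' : 0 < c' < dg) by (split; nra).
    assert (Hd' : 1 - dg < d' < 1) by (split; nra).
    assert (Hcd' : c' <= d') by nra.
    assert (E : RInt f c d = k * L * RInt g c' d').
    { rewrite <- Ec, <- Ed, <- (RInt_comp_lin (V := R_CompleteNormedModule))
        by (rewrite Ec, Ed; apply (ex_RInt_continuous_open f a b); auto; lra).
      rewrite <- (RInt_scal (V := R_CompleteNormedModule)) by (apply Hgex; lra).
      apply (RInt_ext (V := R_CompleteNormedModule)).
      intros x Hx. rewrite Rmin_left, Rmax_right in Hx by lra.
      unfold scal; simpl; unfold mult; simpl.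
      rewrite (Rplus_comm (L * x) a), Hfg by lra. ring. }
    rewrite E.
    specialize (K c' d' ltac:(lra) ltac:(lra) Hcd'); simpl in K.
    replace (k * L * RInt g c' d' - k * L * l) with ((k * L) * (RInt g c' d' - l)) by ring.
    rewrite Rabs_mult, Rabs_mult, (Rabs_right L) by lra.
    apply Rle_lt_trans with (Rabs k * L * e).
    + apply Rmult_le_compat_l; [pose proof (Rabs_pos k); nra | lra].
    + replace (Rabs k * L * e) with (eps - e) by (unfold e; field; pose proof (Rabs_pos k); nra).
      lra.
Qed.

(** * Beta integrals *)

(* [hpow n x] is x^((n-1)/2) for x > 0. *)
Definition hpow (n : nat) (x : R) : R := sqrt x ^ n / sqrt x.

Lemma hpow_nonneg n x : 0 < x -> 0 <= hpow n x.
Proof.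
  intros Hx. pose proof (sqrt_lt_R0 x Hx). unfold hpow.
  apply Rmult_le_pos; [apply pow_le | apply Rlt_le, Rinv_0_lt_compat]; lra.
Qed.

Lemma hpow_mult n x y : 0 < x -> 0 < y -> hpow n (x * y) = hpow n x * hpow n y.
Proof.
  intros Hx Hy. pose proof (sqrt_lt_R0 x Hx); pose proof (sqrt_lt_R0 y Hy).
  unfold hpow. rewrite sqrt_mult, Rpow_mult_distr by lra. field; lra.
Qed.

Lemma hpow_succ n x : 0 < x -> hpow (S n) x = hpow n x * sqrt x.
Proof. intros Hx. pose proof (sqrt_lt_R0 x Hx). unfold hpow. simpl. field; lra. Qed.

Lemma hpow_le n x T1 T2 : 0 < T1 -> T1 <= x <= T2 -> hpow n x <= sqrt T2 ^ n / sqrt T1.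
Proof.
  intros HT1 Hx. pose proof (sqrt_lt_R0 T1 HT1). unfold hpow, Rdiv.
  apply Rmult_le_compat.
  - apply pow_le, sqrt_pos.
  - apply Rlt_le, Rinv_0_lt_compat, sqrt_lt_R0; lra.
  - apply pow_incr. split; [apply sqrt_pos | apply sqrt_le_1_alt; lra].
  - apply Rinv_le_contravar; [lra | apply sqrt_le_1_alt; lra].
Qed.

Definition Beta_integrand (n : nat) (u : R) : R := hpow n u / sqrt (1 - u).

(* Euler's integral B((n+1)/2, 1/2). *)
Definition Beta_half (n : nat) : R := improper_int (Beta_integrand n) 0 1.

Lemma Beta_integrand_continuous n u : 0 < u < 1 -> continuous (Beta_integrand n) u.
Proof.
  intros Hu. unfold Beta_integrand, hpow.
  apply (ex_derive_continuous (K := R_AbsRing) (V := R_NormedModule)).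
  auto_derive. repeat split; try lra; apply Rgt_not_eq, sqrt_lt_R0; lra.
Qed.

Lemma Beta_integrand_0_le u : 0 < u < 1 ->
  Rabs (Beta_integrand 0 u) <= / sqrt u + / sqrt (1 - u).
Proof.
  intros Hu. unfold Beta_integrand, hpow; simpl.
  assert (ha : 0 < sqrt u) by (apply sqrt_lt_R0; lra).
  assert (hb : 0 < sqrt (1 - u)) by (apply sqrt_lt_R0; lra).
  assert (Ea : sqrt u * sqrt u = u) by (apply sqrt_sqrt; lra).
  assert (Eb : sqrt (1 - u) * sqrt (1 - u) = 1 - u) by (apply sqrt_sqrt; lra).
  set (a := sqrt u) in *; set (b := sqrt (1 - u)) in *.
  assert (Hab : 1 <= a + b) by nra.
  rewrite Rabs_right by (apply Rle_ge, Rmult_le_pos;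
    [apply Rmult_le_pos; [lra | apply Rlt_le, Rinv_0_lt_compat; lra]
    | apply Rlt_le, Rinv_0_lt_compat; lra]).
  apply Rmult_le_reg_r with (a * b); [nra |].
  replace (1 / a / b * (a * b)) with 1 by (field; lra).
  replace ((/ a + / b) * (a * b)) with (a + b) by (field; lra). lra.
Qed.

(* s^m <= e^{-m(1-s)} <= e^{-2w} <= (1 + w)^{-3/2} with w = m(1 - s^2)/4. *)
Lemma pow_le_decay s m : 0 <= s <= 1 ->
  s ^ m <= / ((1 + INR m / 4 * (1 - s * s)) * sqrt (1 + INR m / 4 * (1 - s * s))).
Proof.
  intros Hs. set (w := INR m / 4 * (1 - s * s)).
  assert (Hm : 0 <= INR m) by apply pos_INR.
  assert (Hw : 0 <= w) by (unfold w; apply Rmult_le_pos; nra).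
  apply Rle_trans with (exp (INR m * (s - 1))).
  { replace (exp (INR m * (s - 1))) with (exp (s - 1) ^ m)
      by (rewrite <- Rpower_pow by apply exp_pos; unfold Rpower; now rewrite ln_exp).
    apply pow_incr. split; [lra |]. pose proof (exp_ineq1_le (s - 1)). lra. }
  apply Rle_trans with (exp (- (2 * w))).
  { assert (0 <= INR m * ((1 - s) * (1 - s))) by (apply Rmult_le_pos; nra).
    assert (Hle : INR m * (s - 1) <= - (2 * w)) by (unfold w; nra).
    destruct Hle as [Hlt | ->]; [left; now apply exp_increasing | lra]. }
  rewrite exp_Ropp. apply Rinv_le_contravar.
  { apply Rmult_lt_0_compat; [lra | apply sqrt_lt_R0; lra]. }
  replace (2 * w) with (w + w) by ring. rewrite exp_plus.
  pose proof (exp_ineq1_le w).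
  assert (Hs1 : sqrt (1 + w) * sqrt (1 + w) = 1 + w) by (apply sqrt_sqrt; lra).
  assert (Hs2 : sqrt 1 <= sqrt (1 + w)) by (apply sqrt_le_1_alt; lra).
  rewrite sqrt_1 in Hs2.
  apply Rmult_le_compat; nra.
Qed.

Lemma Beta_integrand_succ_le m u : 0 < u < 1 ->
  Rabs (Beta_integrand (S m) u) <=
  / (sqrt (1 - u) * (1 + INR m / 4 * (1 - u)) * sqrt (1 + INR m / 4 * (1 - u))).
Proof.
  intros Hu. set (lam := INR m / 4).
  assert (Hlam : 0 <= lam) by (unfold lam; pose proof (pos_INR m); lra).
  assert (ha : 0 < sqrt u) by (apply sqrt_lt_R0; lra).
  assert (hb : 0 < sqrt (1 - u)) by (apply sqrt_lt_R0; lra).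
  assert (hc : 0 < sqrt (1 + lam * (1 - u))) by (apply sqrt_lt_R0; nra).
  pose proof (pow_le_decay (sqrt u) m) as K.
  rewrite sqrt_sqrt in K by lra.
  assert (Hsu : sqrt u <= 1) by (rewrite <- sqrt_1; apply sqrt_le_1_alt; lra).
  specialize (K ltac:(lra)). fold lam in K.
  assert (0 <= sqrt u ^ m) by (apply pow_le; lra).
  unfold Beta_integrand, hpow.
  replace (sqrt u ^ S m / sqrt u / sqrt (1 - u)) with (sqrt u ^ m * / sqrt (1 - u))
    by (simpl; field; lra).
  rewrite Rabs_right by (apply Rle_ge, Rmult_le_pos; [lra | apply Rlt_le, Rinv_0_lt_compat; lra]).
  replace (/ (sqrt (1 - u) * (1 + lam * (1 - u)) * sqrt (1 + lam * (1 - u))))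
    with (/ ((1 + lam * (1 - u)) * sqrt (1 + lam * (1 - u))) * / sqrt (1 - u))
    by (field; repeat split; nra).
  apply Rmult_le_compat_r; [apply Rlt_le, Rinv_0_lt_compat |]; lra.
Qed.

Lemma is_improper_RInt_Beta_0_majorant :
  is_improper_RInt (fun u => / sqrt u + / sqrt (1 - u)) 0 1 4.
Proof.
  replace 4 with ((2 * sqrt 1 - 2 * sqrt (1 - 1)) - (2 * sqrt 0 - 2 * sqrt (1 - 0)))
    by (rewrite Rminus_0_r, Rminus_diag, sqrt_0, sqrt_1; ring).
  apply (is_improper_RInt_derive (fun u => 2 * sqrt u - 2 * sqrt (1 - u)));
    [lra | reg; lra | reg; lra | |].
  - intros x Hx. assert (0 < sqrt x) by (apply sqrt_lt_R0; lra).
    assert (0 < sqrt (1 - x)) by (apply sqrt_lt_R0; lra).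
    auto_derive; [repeat split; lra |]. replace (1 + - x) with (1 - x) by ring. field; lra.
  - intros x Hx. apply (ex_derive_continuous (K := R_AbsRing) (V := R_NormedModule)).
    auto_derive. repeat split; try lra; apply Rgt_not_eq, sqrt_lt_R0; lra.
Qed.

Lemma is_improper_RInt_Beta_succ_majorant lam : 0 <= lam ->
  is_improper_RInt (fun u => / (sqrt (1 - u) * (1 + lam * (1 - u)) * sqrt (1 + lam * (1 - u))))
    0 1 (2 / sqrt (1 + lam)).
Proof.
  intros Hlam.
  set (G := fun u => -2 * sqrt (1 - u) / sqrt (1 + lam * (1 - u))).
  assert (HG : 2 / sqrt (1 + lam) = G 1 - G 0).
  { assert (0 < sqrt (1 + lam)) by (apply sqrt_lt_R0; lra).
    unfold G. rewrite Rminus_0_r, Rminus_diag, Rmult_0_r, Rplus_0_r, sqrt_0, Rmult_1_r, sqrt_1.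
    field; lra. }
  rewrite HG.
  apply is_improper_RInt_derive; [lra | | | |];
    try (unfold G; reg; try apply Rgt_not_eq, sqrt_lt_R0; nra).
  - intros x Hx. unfold G.
    assert (HA : 0 < sqrt (1 - x)) by (apply sqrt_lt_R0; lra).
    assert (HB : 0 < sqrt (1 + lam * (1 - x))) by (apply sqrt_lt_R0; nra).
    auto_derive;
      [replace (1 + - x) with (1 - x) by ring; repeat split; try apply Rgt_not_eq; nra |].
    replace (1 + - x) with (1 - x) by ring.
    assert (EA : sqrt (1 - x) * sqrt (1 - x) = 1 - x) by (apply sqrt_sqrt; lra).
    assert (EB : sqrt (1 + lam * (1 - x)) * sqrt (1 + lam * (1 - x)) = 1 + lam * (1 - x))
      by (apply sqrt_sqrt; nra).
    rewrite <- EB.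
    set (A := sqrt (1 - x)) in *; set (B := sqrt (1 + lam * (1 - x))) in *.
    assert (El : lam = (B * B - 1) / (A * A)) by (rewrite EB, EA; field; lra).
    clearbody A B. rewrite El, sqrt_square by lra. field. lra.
  - intros x Hx. apply (ex_derive_continuous (K := R_AbsRing) (V := R_NormedModule)).
    assert (0 < sqrt (1 + - x)) by (apply sqrt_lt_R0; lra).
    assert (0 < sqrt (1 + lam * (1 + - x))) by (apply sqrt_lt_R0; nra).
    auto_derive. repeat split; try lra; try nra.
    apply Rgt_not_eq, Rmult_lt_0_compat; [apply Rmult_lt_0_compat |]; nra.
Qed.

Lemma Beta_half_spec n :
  is_improper_RInt (Beta_integrand n) 0 1 (Beta_half n) /\
  Rabs (Beta_half n) <= match n with O => 4 | S m => 2 / sqrt (1 + INR m / 4) end.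
Proof.
  destruct n as [| m].
  - exact (improper_int_dominated _ _ 0 1 _ Rlt_0_1 (Beta_integrand_continuous 0)
      is_improper_RInt_Beta_0_majorant Beta_integrand_0_le).
  - assert (Hm : 0 <= INR m / 4) by (pose proof (pos_INR m); lra).
    exact (improper_int_dominated _ _ 0 1 _ Rlt_0_1 (Beta_integrand_continuous (S m))
      (is_improper_RInt_Beta_succ_majorant _ Hm) (Beta_integrand_succ_le m)).
Qed.

Lemma Beta_half_vanishes e : 0 < e -> exists N, forall n, (N <= n)%nat -> Rabs (Beta_half n) <= e.
Proof.
  intros He. destruct (INR_archimed 1 (64 / (e * e))) as [N HN]; [lra |].
  exists (S N). intros [| m] Hm; [lia |].
  apply Rle_trans with (2 / sqrt (1 + INR m / 4)); [apply (Beta_half_spec (S m)) |].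
  apply le_INR in Hm. rewrite !S_INR in Hm. rewrite Rmult_1_r in HN.
  assert (Hs : 2 / e <= sqrt (1 + INR m / 4)).
  { rewrite <- (sqrt_square (2 / e)) by (apply Rlt_le, Rdiv_lt_0_compat; lra).
    apply sqrt_le_1_alt. replace (2 / e * (2 / e)) with (64 / (e * e) / 16) by (field; lra).
    set (X := 64 / (e * e)) in *. pose proof (pos_INR m). lra. }
  assert (0 < 2 / e) by (apply Rdiv_lt_0_compat; lra).
  unfold Rdiv in *. apply Rle_trans with (2 * / (2 * / e)).
  - apply Rmult_le_compat_l; [lra |]. apply Rinv_le_contravar; lra.
  - right. field. lra.
Qed.

(** * The Born series *)

Lemma exp_le_1 y : y <= 0 -> exp y <= 1.
Proof.
  intros [Hy | ->]; [| rewrite exp_0; lra].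
  rewrite <- exp_0. left. now apply exp_increasing.
Qed.

Lemma exp_neg_div_le_1 y z : 0 <= y -> 0 < z -> exp (- y / z) <= 1.
Proof.
  intros Hy Hz. apply exp_le_1.
  assert (0 <= y / z) by (apply Rmult_le_pos; [| apply Rlt_le, Rinv_0_lt_compat]; lra).
  unfold Rdiv in *. lra.
Qed.

Section BornSeries.

Variables gamma beta t0 : R.
Hypothesis hgamma : 0 < gamma.

Fixpoint born_coef (n : nat) : R :=
  match n with
  | O => / (4 * Rpower (PI * gamma) (3 / 2))
  | S m => - beta / sqrt (PI * gamma) * born_coef m * Beta_half m
  end.

Definition born_integrand (c : R) (n : nat) (t x s : R) : R :=
  c * hpow n (s - t0) / sqrt (t - s) * exp (- x ^ 2 / (4 * gamma * (t - s))).

Lemma born_integrand_continuous c n t x s : t0 < s < t -> continuous (born_integrand c n t x) s.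
Proof.
  intros Hs. unfold born_integrand, hpow.
  apply (ex_derive_continuous (K := R_AbsRing) (V := R_NormedModule)).
  auto_derive. repeat split; try lra; apply Rgt_not_eq;
    [apply sqrt_lt_R0 | apply sqrt_lt_R0 | apply Rmult_lt_0_compat]; lra.
Qed.

Lemma born_integrand_abs_le c n t x s : t0 < s < t ->
  Rabs (born_integrand c n t x s) <= born_integrand (Rabs c) n t 0 s.
Proof.
  intros Hs. unfold born_integrand.
  replace (- 0 ^ 2 / (4 * gamma * (t - s))) with 0 by (unfold Rdiv; ring).
  rewrite exp_0, Rmult_1_r, Rabs_mult, (Rabs_pos_eq (exp _)) by apply Rlt_le, exp_pos.
  assert (0 < sqrt (t - s)) by (apply sqrt_lt_R0; lra).
  pose proof (hpow_nonneg n (s - t0) ltac:(lra)).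
  unfold Rdiv. rewrite !Rabs_mult, (Rabs_pos_eq (hpow _ _)), (Rabs_pos_eq (/ sqrt _))
    by (auto; apply Rlt_le, Rinv_0_lt_compat; lra).
  rewrite <- (Rmult_1_r (Rabs c * hpow n (s - t0) * / sqrt (t - s))) at 2.
  apply Rmult_le_compat_l; [apply Rmult_le_pos; [apply Rmult_le_pos; [apply Rabs_pos | lra] |
    apply Rlt_le, Rinv_0_lt_compat; lra] |].
  apply exp_neg_div_le_1; [apply pow2_ge_0 | nra].
Qed.

Lemma is_improper_RInt_born_integrand_0 c n t : t0 < t ->
  is_improper_RInt (born_integrand c n t 0) t0 t (c * Beta_half n * hpow (S n) (t - t0)).
Proof.
  intros Ht. set (L := t - t0).
  assert (HL : 0 < L) by (unfold L; lra).
  assert (HsL : 0 < sqrt L) by (apply sqrt_lt_R0; lra).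
  replace (c * Beta_half n * hpow (S n) L) with (c * hpow n L / sqrt L * L * Beta_half n)
    by (rewrite hpow_succ by lra; pose proof (sqrt_sqrt L (Rlt_le _ _ HL)) as EL;
        set (q := sqrt L) in *; clearbody q; rewrite <- EL; field; lra).
  apply (is_improper_RInt_affine _ (Beta_integrand n)); auto;
    [apply born_integrand_continuous | | apply Beta_half_spec].
  intros u Hu. unfold born_integrand, Beta_integrand. fold L.
  replace (- 0 ^ 2 / (4 * gamma * (t - (t0 + L * u)))) with 0 by (unfold Rdiv; ring).
  replace (t0 + L * u - t0) with (L * u) by ring.
  replace (t - (t0 + L * u)) with (L * (1 - u)) by (unfold L; ring).
  rewrite exp_0, hpow_mult, sqrt_mult by lra.
  assert (0 < sqrt (1 - u)) by (apply sqrt_lt_R0; lra).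
  field. lra.
Qed.

Lemma w_boundary n t : t0 < t -> w gamma beta t0 n 0 t = born_coef n * hpow n (t - t0).
Proof.
  revert t; induction n as [| n IH]; intros t Ht; cbn [w born_coef];
    destruct (Rle_dec t t0) as [| _]; try lra.
  - replace (- 0 ^ 2 / (4 * gamma * (t - t0))) with 0 by (unfold Rdiv; ring).
    assert (0 < sqrt (t - t0)) by (apply sqrt_lt_R0; lra).
    assert (0 < Rpower (PI * gamma) (3 / 2)) by apply exp_pos.
    rewrite exp_0. unfold hpow. simpl. field. lra.
  - rewrite (improper_int_correct _ t0 t (born_coef n * Beta_half n * hpow (S n) (t - t0)));
      [ring | lra |].
    apply is_improper_RInt_ext with (born_integrand (born_coef n) n t 0);
      [| now apply is_improper_RInt_born_integrand_0].
    intros s Hs. unfold born_integrand. rewrite IH by lra. reflexivity.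
Qed.

Lemma w_abs_le n x t : t0 < t ->
  Rabs (w gamma beta t0 n x t) <= Rabs (born_coef n) * hpow n (t - t0).
Proof.
  intros Ht. assert (HsL : 0 < sqrt (t - t0)) by (apply sqrt_lt_R0; lra).
  destruct n as [| n]; cbn [w born_coef]; destruct (Rle_dec t t0) as [| _]; try lra.
  - assert (0 < Rpower (PI * gamma) (3 / 2)) by apply exp_pos.
    assert (0 < / (4 * Rpower (PI * gamma) (3 / 2))) by (apply Rinv_0_lt_compat; lra).
    assert (0 < / (4 * Rpower (PI * gamma) (3 / 2) * sqrt (t - t0)))
      by (apply Rinv_0_lt_compat; nra).
    pose proof (exp_pos (- x ^ 2 / (4 * gamma * (t - t0)))).
    pose proof (exp_neg_div_le_1 (x ^ 2) (4 * gamma * (t - t0)) (pow2_ge_0 x) ltac:(nra)).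
    rewrite Rabs_mult, !Rabs_pos_eq by lra.
    unfold hpow; rewrite pow_O. replace (/ (4 * Rpower (PI * gamma) (3 / 2) * sqrt (t - t0)))
      with (/ (4 * Rpower (PI * gamma) (3 / 2)) * (1 / sqrt (t - t0))) by (field; lra).
    assert (0 < / (4 * Rpower (PI * gamma) (3 / 2)) * (1 / sqrt (t - t0)))
      by (apply Rmult_lt_0_compat; [| apply Rdiv_lt_0_compat]; lra).
    nra.
  - destruct (improper_RInt_dominated (born_integrand (born_coef n) n t x)
      (born_integrand (Rabs (born_coef n)) n t 0) t0 t _ Ht
      (fun s Hs => born_integrand_continuous _ n t x s Hs)
      (is_improper_RInt_born_integrand_0 _ n t Ht)
      (fun s Hs => born_integrand_abs_le _ n t x s Hs)) as [l [Hl Hle]].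
    rewrite (improper_int_correct _ t0 t l Ht).
    2: { apply (is_improper_RInt_ext (born_integrand (born_coef n) n t x)); auto.
         intros s Hs. unfold born_integrand. now rewrite w_boundary by lra. }
    rewrite !Rabs_mult.
    replace (Rabs (- beta / sqrt (PI * gamma)) * Rabs (born_coef n) * Rabs (Beta_half n)
      * hpow (S n) (t - t0)) with (Rabs (- beta / sqrt (PI * gamma))
      * (Rabs (born_coef n) * Rabs (Beta_half n) * hpow (S n) (t - t0))) by ring.
    apply Rmult_le_compat_l; [apply Rabs_pos |].
    eapply Rle_trans; [exact Hle |].
    apply Rmult_le_compat_r; [apply hpow_nonneg; lra |].
    apply Rmult_le_compat_l; [apply Rabs_pos | apply Rle_abs].
Qed.

Lemma born_coef_ex_series r : 0 <= r -> ex_series (fun n => Rabs (born_coef n) * r ^ n).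
Proof.
  intros Hr. set (K := Rabs (- beta / sqrt (PI * gamma))).
  assert (HK : 0 <= K) by apply Rabs_pos.
  destruct (Beta_half_vanishes (/ (2 * (K * r + 1)))) as [N HN].
  { apply Rinv_0_lt_compat. nra. }
  apply (ex_series_ratio_le _ (/ 2) N); [lra | |].
  - intros n. apply Rmult_le_pos; [apply Rabs_pos | now apply pow_le].
  - intros n Hn. simpl. fold K. rewrite !Rabs_mult. fold K.
    specialize (HN n Hn).
    pose proof (Rabs_pos (born_coef n)). pose proof (pow_le r n Hr).
    assert (Hq : K * r * Rabs (Beta_half n) <= / 2).
    { apply Rle_trans with (K * r * / (2 * (K * r + 1))).
      - apply Rmult_le_compat_l; nra.
      - apply Rmult_le_reg_r with (2 * (K * r + 1)); [nra |].
        rewrite Rmult_assoc, Rinv_l by nra. nra. }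
    replace (K * Rabs (born_coef n) * Rabs (Beta_half n) * (r * r ^ n))
      with ((K * r * Rabs (Beta_half n)) * (Rabs (born_coef n) * r ^ n)) by ring.
    apply Rmult_le_compat_r; [apply Rmult_le_pos |]; lra.
Qed.

Lemma w_dominated_on_strips : dominated_on_strips_2 t0 (w gamma beta t0).
Proof.
  intros T1 T2 HT1. assert (HsT1 : 0 < sqrt T1) by (apply sqrt_lt_R0; lra).
  exists (fun n => / sqrt T1 * (Rabs (born_coef n) * sqrt T2 ^ n)); split.
  - apply (ex_series_scal (V := R_NormedModule)), born_coef_ex_series, sqrt_pos.
  - intros n y s Hs. eapply Rle_trans; [apply w_abs_le; lra |].
    pose proof (hpow_le n (s - t0) T1 T2 HT1 Hs). pose proof (Rabs_pos (born_coef n)).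
    replace (/ sqrt T1 * (Rabs (born_coef n) * sqrt T2 ^ n))
      with (Rabs (born_coef n) * (sqrt T2 ^ n / sqrt T1)) by (field; lra).
    apply Rmult_le_compat_l; lra.
Qed.

Lemma v_abs_le b n x1 x2 x3 s : 0 <= b -> t0 < s ->
  Rabs (v gamma b beta t0 n x1 x2 x3 s) <= Rabs (w gamma beta t0 n x3 s) / (s - t0).
Proof.
  intros Hb Hs. unfold v.
  pose proof (exp_pos (- b * (s - t0))).
  pose proof (exp_le_1 (- b * (s - t0)) ltac:(nra)).
  pose proof (exp_pos (- (x1 ^ 2 + x2 ^ 2) / (4 * gamma * (s - t0)))).
  pose proof (exp_neg_div_le_1 (x1 ^ 2 + x2 ^ 2) (4 * gamma * (s - t0))
    ltac:(pose proof (pow2_ge_0 x1); pose proof (pow2_ge_0 x2); lra) ltac:(nra)).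
  assert (0 < / (s - t0)) by (apply Rinv_0_lt_compat; lra).
  pose proof (Rabs_pos (w gamma beta t0 n x3 s)).
  unfold Rdiv. rewrite !Rabs_mult, !Rabs_pos_eq by lra.
  rewrite (Rmult_comm (Rabs _) (/ (s - t0))).
  apply Rmult_le_compat_r; [lra |].
  replace (/ (s - t0)) with (1 * / (s - t0) * 1) at 2 by ring.
  apply Rmult_le_compat; nra.
Qed.

Lemma v_dominated_on_strips b : 0 <= b -> dominated_on_strips_4 t0 (v gamma b beta t0).
Proof.
  intros Hb T1 T2 HT1. destruct (w_dominated_on_strips T1 T2 HT1) as [M [HM Hw]].
  exists (fun n => / T1 * M n); split; [now apply (ex_series_scal (V := R_NormedModule)) |].
  intros n y1 y2 y3 s Hs. eapply Rle_trans; [apply v_abs_le; lra |].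
  pose proof (Hw n y3 s Hs). pose proof (Rabs_pos (w gamma beta t0 n y3 s)).
  unfold Rdiv. rewrite Rmult_comm. apply Rmult_le_compat; try lra.
  - apply Rlt_le, Rinv_0_lt_compat; lra.
  - apply Rinv_le_contravar; lra.
Qed.

End BornSeries.

Theorem mainTheorem10 (gamma b t0 beta : R)
  (hgamma : 0 < gamma) (hb : 0 <= b) (hbeta : 0 <= beta) :
  (exists S Sabs : R -> R -> R,
     series_loc_unif_2 t0 (fun n x3 t => w gamma beta t0 n x3 t) S /\
     series_loc_unif_2 t0 (fun n x3 t => Rabs (w gamma beta t0 n x3 t)) Sabs) /\
  (exists S Sabs : R -> R -> R -> R -> R,
     series_loc_unif_4 t0 (fun n x1 x2 x3 t => v gamma b beta t0 n x1 x2 x3 t) S /\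
     series_loc_unif_4 t0 (fun n x1 x2 x3 t => Rabs (v gamma b beta t0 n x1 x2 x3 t)) Sabs).
Proof.
  split; do 2 eexists.
  - apply series_loc_unif_2_abs_of_dominated, w_dominated_on_strips, hgamma.
  - apply series_loc_unif_4_abs_of_dominated, v_dominated_on_strips; assumption.
Qed.
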